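(* For all positive integers $\Delta$ and positive reals $\nu$ there is $c$ such that if $p\ge c(\log n/n)^{1/\Delta}$, the following holds a.a.s. for $\Gamma=G(n,p)$ on vertex set $V$. Let $X$ be any subset of $V$ and $\mathcal{F}$ any family of pairwise disjoint $\Delta$-sets in $V\setminus X$. If $\nu n\le|X|\le|\mathcal{F}|\le n$, then $\mathrm{stars}_\Gamma(X,\mathcal{F})\le 7p^\Delta|X||\mathcal{F}|$.
   Context: $G(n,p)$ is the random graph on $[n]$ with edges present independently with probability $p$; a.a.s. means with probability tending to $1$ as $n\to\infty$ (simultaneously for all such $X,\mathcal{F}$). For a graph $G$, a vertex set $X$ and a family $\mathcal{F}$ of pairwise disjoint $\ell$-sets outside $X$, $\mathrm{stars}_G(X,\mathcal{F})$ is the number of pairs $(x,F)$ with $x\in X$, $F\in\mathcal{F}$ and $F\subseteq N_G(x)$. *)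

From HB Require Import structures.
From mathcomp Require Import all_boot all_order all_algebra.
From mathcomp Require Import all_classical all_reals all_analysis.
Set Implicit Arguments. Unset Strict Implicit. Unset Printing Implicit Defensive.
Import Order.TTheory GRing.Theory Num.Theory.
Local Open Scope ring_scope.

(* A simple graph on [n] = 'I_n is a set of 2-element vertex sets (its edges). *)
Definition pairs (n : nat) : {set {set 'I_n}} := [set e : {set 'I_n} | #|e| == 2%N].

Definition gnp_prob {R : realType} (n : nat) (p : R) (P : pred {set {set 'I_n}}) : R :=
  \sum_(E : {set {set 'I_n}} | (E \subset pairs n) && P E)
     p ^+ #|E| * (1 - p) ^+ (#|pairs n| - #|E|).

Definition nbhd (n : nat) (E : {set {set 'I_n}}) (x : 'I_n) : {set 'I_n} :=
  [set y | [set x; y] \in E].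

Definition stars (n : nat) (E : {set {set 'I_n}}) (X : {set 'I_n})
    (F : {set {set 'I_n}}) : nat :=
  #|[set xf : 'I_n * {set 'I_n} | [&& xf.1 \in X, xf.2 \in F & xf.2 \subset nbhd E xf.1]]|.

Definition stars_event {R : realType} (Delta : nat) (nu p : R) (n : nat)
    (E : {set {set 'I_n}}) : bool :=
  [forall X : {set 'I_n}, forall F : {set {set 'I_n}},
    ([forall f in F, #|f| == Delta]
     && [forall f in F, [disjoint f & X]]
     && [forall f in F, forall g in F, (f != g) ==> [disjoint f & g]]
     && (nu * n%:R <= #|X|%:R) && (#|X| <= #|F|)%N && (#|F| <= n)%N)
    ==> ((stars E X F)%:R <= 7 * p ^+ Delta * #|X|%:R * #|F|%:R)].

(* A violation of the event is witnessed by admissible [(X, F)] together with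
   a set [K] of exactly [k = floor(7 p^Delta |X| |F|) + 1] stars.  Since the sets
   of [F] are pairwise disjoint and avoid [X], the stars of [K] use [Delta |K|]
   distinct edges, so [K] is present with probability [p^(Delta k)].  A union
   bound over the [C(|X| |F|, k)] choices of [K] gives at most
   [(e |X| |F| p^Delta / k)^k <= (e/7)^k <= e^(-k/3)], and the density of [p]
   makes [k >= 3 (Delta + 3) n ln n], i.e. [e^(-k/3) <= n^-((Delta + 3) n)].
   There are at most [n^((Delta + 2) n)] admissible pairs [(X, F)], so the
   event fails with probability at most [n^-n]. *)

From HB Require Import structures.
From mathcomp Require Import all_boot all_order all_algebra.
From mathcomp Require Import all_classical all_reals all_analysis.
From mathcomp Require Import ring lra zify.
Set Implicit Arguments. Unset Strict Implicit. Unset Printing Implicit Defensive.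
Import Order.TTheory GRing.Theory Num.Theory.
Local Open Scope ring_scope.

Section GnpProbability.
Variables (R : realType) (n : nat) (p : R).
Local Notation graph := {set {set 'I_n}}.
Local Notation prob := (@gnp_prob R n p).

Definition gnp_weight (E : graph) : R :=
  p ^+ #|E| * (1 - p) ^+ (#|pairs n| - #|E|).

Lemma gnp_probE (P : pred graph) :
  prob P = \sum_(E : graph | E \subset pairs n) gnp_weight E * (P E)%:R.
Proof.
rewrite /gnp_prob big_mkcondr /=; apply: eq_bigr => E _.
by case: (P E); rewrite ?mulr1 ?mulr0.
Qed.

(* Expand [p^|A| = prod_e (h e true + h e false)] over all edge sets [J] by
   [bigA_distr]: the product for [J] is the weight of [J] if [A <= J <= pairs n]
   and [0] otherwise. *)
Lemma gnp_prob_supset (A : graph) : A \subset pairs n ->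
  prob (fun E => A \subset E) = p ^+ #|A|.
Proof.
move=> sAP.
pose h (e : {set 'I_n}) (b : bool) : R :=
  if b then (if e \in pairs n then p else 0)
  else if e \in A then 0 else if e \in pairs n then 1 - p else 1.
have -> : p ^+ #|A| = \prod_e (h e true + h e false).
  rewrite -prodr_const (big_mkcond (mem A)) /=; apply: eq_bigr => e _; rewrite /h.
  case: (boolP (e \in A)) => eA; first by rewrite (fintype.subsetP sAP _ eA) addr0.
  by case: (e \in pairs n); rewrite ?add0r // addrC subrK.
rewrite bigA_distr /gnp_prob big_mkcond /=; apply: eq_bigr => J _.
case: ifP => [/andP[sJP sAJ]|/negbT].
  rewrite (bigID (mem J)) /= (eq_bigr (fun _ => p)); last first.
    by move=> e eJ; rewrite eJ /h (fintype.subsetP sJP _ eJ).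
  rewrite prodr_const (eq_bigr (fun e => if e \in pairs n :\: J then 1 - p else 1)); last first.
    move=> e eJ; rewrite (negbTE eJ) /h finset.in_setD eJ /=.
    by case: ifP => // eA; rewrite (fintype.subsetP sAJ _ eA) in eJ.
  rewrite -big_mkcondr (eq_bigl (fun e => e \in pairs n :\: J)); last first.
    by move=> e; rewrite finset.in_setD; case: (e \in J).
  by rewrite prodr_const cardsD (finset.setIidPr sJP).
rewrite negb_and => /orP[/fintype.subsetPn[e eJ eP]|/fintype.subsetPn[e eA eJ]].
  by rewrite (bigD1 e) //= eJ /h (negbTE eP) mul0r.
by rewrite (bigD1 e) //= (negbTE eJ) /h eA mul0r.
Qed.

Lemma gnp_probT : prob predT = 1.
Proof.
rewrite -(expr0 p) -(cards0 {set 'I_n}) -gnp_prob_supset ?finset.sub0set //.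
by apply: eq_bigl => E; rewrite finset.sub0set.
Qed.

Lemma gnp_probC (P : pred graph) : prob P = 1 - prob (predC P).
Proof.
apply/eqP; rewrite eq_sym subr_eq -gnp_probT !gnp_probE -big_split /=.
by apply/eqP/eq_bigr => E _; case: (P E); rewrite /= ?mulr0 ?mulr1 ?addr0 ?add0r.
Qed.

Hypotheses (p_ge0 : 0 <= p) (p_le1 : p <= 1).

Lemma gnp_weight_ge0 (E : graph) : 0 <= gnp_weight E.
Proof. by rewrite /gnp_weight mulr_ge0 // exprn_ge0 // subr_ge0. Qed.

Lemma le_gnp_prob (P Q : pred graph) : (forall E, P E -> Q E) -> prob P <= prob Q.
Proof.
move=> PQ; rewrite !gnp_probE; apply: ler_sum => E _.
rewrite ler_wpM2l ?gnp_weight_ge0 //.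
by case: (boolP (P E)) => [/PQ -> //|_]; rewrite ler_nat.
Qed.

Lemma gnp_prob_exists_le (I : finType) (P : pred I) (Q : I -> pred graph) :
  prob (fun E => [exists i, P i && Q i E]) <= \sum_(i | P i) prob (Q i).
Proof.
under [X in _ <= X]eq_bigr do rewrite gnp_probE.
rewrite gnp_probE exchange_big /=; apply: ler_sum => E _.
rewrite -mulr_sumr ler_wpM2l ?gnp_weight_ge0 //.
case: existsP => [[i /andP[Pi Qi]]|_]; last by rewrite sumr_ge0.
by rewrite (bigD1 i) //= Qi lerDl sumr_ge0.
Qed.

End GnpProbability.

Lemma leq_exp2rW (m k e : nat) : (m <= k)%N -> (m ^ e <= k ^ e)%N.
Proof. by move=> mk; elim: e => // e IH; rewrite !expnS leq_mul. Qed.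

Lemma ffact_leq_expn (m k : nat) : (m ^_ k <= m ^ k)%N.
Proof.
rewrite ffact_prod -[X in (_ <= _ ^ X)%N](card_ord k) -prod_nat_const.
by apply: leq_prod => i _; rewrite leq_subr.
Qed.

Lemma bin_leq_expn (m k : nat) : ('C(m, k) <= m ^ k)%N.
Proof.
apply: leq_trans (ffact_leq_expn m k).
by rewrite -bin_ffact leq_pmulr ?fact_gt0.
Qed.

Section ExpBounds.
Variable R : realType.

Lemma expR_le_inv1B (x : R) : x < 1 -> expR x <= (1 - x)^-1.
Proof.
move=> x_lt1; rewrite -[leLHS]invrK lef_pV2 ?posrE ?invr_gt0 ?expR_gt0 ?subr_gt0 //.
by rewrite -expRN; exact: expR_ge1Dx.
Qed.

Lemma expR1_div7_le : expR 1 / 7 <= expR (- 3^-1 : R).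
Proof.
have e13 : expR (3^-1 : R) <= 3 / 2.
  have -> : 3 / 2 = (1 - 3^-1 : R)^-1 by field.
  by apply: expR_le_inv1B; lra.
have e43 : expR (4 / 3 : R) <= 7.
  rewrite expRM_natl.
  apply: le_trans (_ : (3 / 2) ^+ 4 <= 7); last lra.
  by rewrite lerXn2r ?nnegrE ?expR_ge0.
rewrite (_ : expR 1 = expR (4 / 3) * expR (- 3^-1)); last first.
  by rewrite -expRD; congr expR; lra.
by rewrite ler_pdivrMr // [leRHS]mulrC ler_pM2r ?expR_gt0.
Qed.

(* [C(N, k) q^k <= (N q)^k / k! <= (k/7)^k / k! <= (e/7)^k], as [k^k / k! <= e^k]. *)
Lemma bin_exprn_le_expR (N k : nat) (q : R) : 0 <= q -> (0 < k)%N ->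
  7 * (N%:R * q) <= k%:R -> 'C(N, k)%:R * q ^+ k <= expR (- (k%:R / 3)).
Proof.
move=> q_ge0 k_gt0 Nq_le.
have fact_gt0 : 0 < k`!%:R :> R by rewrite ltr0n fact_gt0.
have kk_fact : k%:R ^+ k / k`!%:R <= expR k%:R :> R.
  case: k k_gt0 {Nq_le} fact_gt0 => // k _ fact_gt0.
  by apply: le_trans (expR_ge1Dxn k (ler0n _ _)); rewrite lerDr.
have bin_fact : 'C(N, k)%:R * k`!%:R <= N%:R ^+ k :> R.
  by rewrite -natrM bin_ffact -natrX ler_nat ffact_leq_expn.
have Nq_pow : (N%:R * q) ^+ k <= (k%:R / 7) ^+ k.
  by rewrite lerXn2r ?nnegrE ?mulr_ge0 ?divr_ge0 // ler_pdivlMr // mulrC.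
have -> : expR (- (k%:R / 3)) = expR (- 3^-1 : R) ^+ k.
  by rewrite -expRM_natl; congr expR; lra.
apply: le_trans (_ : (expR 1 / 7) ^+ k <= _); last first.
  by rewrite lerXn2r ?nnegrE ?divr_ge0 ?expR_ge0 ?expR1_div7_le.
rewrite expr_div_n -expRM_natl mulr1.
apply: le_trans (_ : (N%:R * q) ^+ k / k`!%:R <= _).
  rewrite ler_pdivlMr // mulrAC exprMn ler_wpM2r ?exprn_ge0 //.
apply: le_trans (_ : (k%:R / 7) ^+ k / k`!%:R <= _).
  by rewrite ler_pM2r ?invr_gt0.
by rewrite expr_div_n mulrAC ler_wpM2r ?invr_ge0 ?exprn_ge0.
Qed.

Lemma powR_inv_ler_exprn (D : nat) (c x p : R) :
  (0 < D)%N -> 1 <= c -> 0 <= x -> c * powR x D%:R^-1 <= p -> c * x <= p ^+ D.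
Proof.
move=> D_gt0 c_ge1 x_ge0 le_p.
set y := powR x D%:R^-1.
have yD : y ^+ D = x.
  by rewrite /y -powR_mulrn ?powR_ge0 // -powRrM mulVf ?powRr1 // pnatr_eq0 -lt0n.
have cy_ge0 : 0 <= c * y by rewrite mulr_ge0 ?powR_ge0 // (le_trans ler01 c_ge1).
apply: le_trans (_ : c ^+ D * x <= _).
  by rewrite ler_wpM2r // ler_eXnr.
by rewrite -yD -exprMn lerXn2r ?nnegrE // (le_trans cy_ge0 le_p).
Qed.

End ExpBounds.

Definition star_set (n : nat) (E : {set {set 'I_n}}) (X : {set 'I_n})
    (F : {set {set 'I_n}}) : {set 'I_n * {set 'I_n}} :=
  [set xf | [&& xf.1 \in X, xf.2 \in F & xf.2 \subset nbhd E xf.1]].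

(* A star [(x, f)] of [K] forces the edges [xy], [y \in f]; [star_support K]
   lists the triples [((x, f), y)]. *)
Definition star_support (n : nat) (K : {set 'I_n * {set 'I_n}}) :
    {set ('I_n * {set 'I_n}) * 'I_n} :=
  [set z | (z.1 \in K) && (z.2 \in z.1.2)].

Definition star_edges (n : nat) (K : {set 'I_n * {set 'I_n}}) : {set {set 'I_n}} :=
  [set [set z.1.1; z.2] | z in star_support K].

Lemma star_edges_subset n E X F (K : {set 'I_n * {set 'I_n}}) :
  K \subset star_set E X F -> star_edges K \subset E.
Proof.
move=> sK; apply/fintype.subsetP => e /imsetP[z]; rewrite inE => /andP[zK zf] ->.
move: (fintype.subsetP sK _ zK); rewrite inE => /and3P[_ _ /fintype.subsetP sN].
by move: (sN _ zf); rewrite inE.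
Qed.

Section StarEdges.
Variables (n Delta : nat) (X : {set 'I_n}) (F : {set {set 'I_n}}).
Hypothesis F_disjX : {in F, forall f : {set 'I_n}, [disjoint f & X]}.
Hypothesis F_trivI : {in F &, forall f g : {set 'I_n}, f != g -> [disjoint f & g]}.
Variable K : {set 'I_n * {set 'I_n}}.
Hypothesis sKXF : K \subset finset.setX X F.

Lemma star_supportP z : z \in star_support K ->
  [/\ z.1.1 \in X, z.1.2 \in F, z.2 \in z.1.2 & z.2 \notin X].
Proof.
rewrite inE => /andP[zK zf]; move: (fintype.subsetP sKXF _ zK).
rewrite inE => /andP[zX zF]; split => //; apply: contraTN zf => zX'.
by move: (F_disjX zF); rewrite disjoint_sym => /disjointFr ->.
Qed.

Lemma star_edges_pairs : star_edges K \subset pairs n.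
Proof.
apply/fintype.subsetP => e /imsetP[z /star_supportP[zX _ _ zX'] ->].
by rewrite inE cards2; have -> : z.1.1 != z.2 by apply: contraNneq zX' => <-.
Qed.

(* The edge [xy] determines [x] (the endpoint in [X]), [y], and then [f] as the
   unique member of the pairwise disjoint family [F] containing [y]. *)
Lemma card_star_edges :
  {in F, forall f : {set 'I_n}, #|f| = Delta} -> #|star_edges K| = (Delta * #|K|)%N.
Proof.
move=> F_card; rewrite card_in_imset; last first.
  move=> [[x f] y] [[x' f'] y'] /star_supportP[/= xX fF yf yX].
  move=> /star_supportP[/= xX' fF' yf' yX'] exy.
  have ex : x = x'.
    have : x \in [set x'; y'] by rewrite -exy set21.
    by rewrite !inE => /orP[/eqP //|/eqP ex]; rewrite -ex xX in yX'.
  have ey : y = y'.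
    have : y \in [set x'; y'] by rewrite -exy set22.
    by rewrite !inE => /orP[/eqP ey|/eqP //]; rewrite ey xX' in yX.
  subst x' y'; have [<- // | nff'] := eqVneq f f'.
  by move: (F_trivI fF fF' nff') => /disjointFr /(_ yf); rewrite yf'.
rewrite -sum1_card (eq_bigl (fun z => (z.1 \in K) && (z.2 \in z.1.2))); last first.
  by move=> z; rewrite inE.
rewrite -(pair_big_dep (mem K) (fun a y => y \in a.2) (fun _ _ => 1%N)) /=.
rewrite (eq_bigr (fun _ => Delta)) => [|a aK]; first by rewrite sum_nat_const mulnC.
by rewrite sum1_card F_card //; move: (fintype.subsetP sKXF _ aK); rewrite inE => /andP[].
Qed.

End StarEdges.

(* Every family of at most [n] sets of size [Delta] is the set of values of
   some [g : 'I_n -> option {set 'I_n}] whose [Some] values have size [Delta]. *)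
Lemma card_uniform_families_le (n Delta : nat) :
  (#|[set F : {set {set 'I_n}} | [forall f in F, #|f| == Delta] && (#|F| <= n)]|
     <= 'C(n, Delta).+1 ^ n)%N.
Proof.
pose values (g : {ffun 'I_n -> option {set 'I_n}}) : {set {set 'I_n}} :=
  [set f | [exists i, g i == Some f]].
pose sized (o : option {set 'I_n}) := if o is Some f then #|f| == Delta else true.
have card_sized : (#|sized| <= 'C(n, Delta).+1)%N.
  apply: leq_trans (_ : #|None |: (Some @: [set f : {set 'I_n} | #|f| == Delta])| <= _)%N.
    apply: subset_leq_card; apply/fintype.subsetP => -[f|] hf; rewrite !inE //.
    by apply/orP; right; apply: imset_f; rewrite inE.
  rewrite cardsU1 card_imset; last exact: Some_inj.
  by rewrite card_draws card_ord; case: (None \in _).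
apply: leq_trans (_ : #|[set values g | g in ffun_on sized]| <= _)%N; last first.
  apply: leq_trans (leq_imset_card _ _) _.
  by rewrite card_ffun_on card_ord leq_exp2rW.
apply: subset_leq_card; apply/fintype.subsetP => F; rewrite inE => /andP[/forall_inP F_card Fn].
pose g := [ffun i : 'I_n => if (i < #|F|)%N then Some (nth finset.set0 (enum F) i) else None].
apply/imsetP; exists g.
  apply/ffun_onP => i; rewrite ffunE; case: ifP => // iF.
  by apply: F_card; rewrite -mem_enum mem_nth // -cardE.
apply/finset.setP => f; rewrite inE; apply/idP/existsP => [fF|[i]].
  have ifn : (index f (enum F) < n)%N.
    by apply: leq_trans Fn; rewrite cardE index_mem mem_enum.
  exists (Ordinal ifn); rewrite ffunE /= cardE index_mem mem_enum fF.
  by rewrite nth_index ?mem_enum.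
rewrite ffunE; case: ifP => // iF /eqP [<-].
by rewrite -mem_enum mem_nth // -cardE.
Qed.

Section StarsEvent.
Variables (R : realType) (Delta : nat) (nu p : R) (n : nat).
Local Notation vertex_set := {set 'I_n}.
Local Notation family := {set {set 'I_n}}.

Definition stars_admissible (X : vertex_set) (F : family) : bool :=
     [forall f in F, #|f| == Delta]
     && [forall f in F, [disjoint f & X]]
     && [forall f in F, forall g in F, (f != g) ==> [disjoint f & g]]
     && (nu * n%:R <= #|X|%:R) && (#|X| <= #|F|)%N && (#|F| <= n)%N.

Lemma stars_eventE E : @stars_event R Delta nu p n E =
  [forall X, forall F, stars_admissible X F ==>
     ((stars E X F)%:R <= 7 * p ^+ Delta * #|X|%:R * #|F|%:R)].
Proof. by []. Qed.

Lemma stars_admissibleP X F : stars_admissible X F ->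
  [/\ {in F, forall f : vertex_set, #|f| = Delta},
      {in F, forall f : vertex_set, [disjoint f & X]},
      {in F &, forall f g : vertex_set, f != g -> [disjoint f & g]},
      nu * n%:R <= #|X|%:R & (#|X| <= #|F| <= n)%N].
Proof.
case/andP=> /andP[/andP[/andP[/andP[/forall_inP F_card /forall_inP F_disjX]]]].
move=> /forall_inP F_trivI -> XF Fn.
split=> [f /F_card /eqP //|//|f g fF gF|//|]; last by rewrite XF.
by move: (F_trivI f fF) => /forall_inP /(_ g gF) /implyP.
Qed.

Lemma card_stars_admissible_le :
  (#|[set a : vertex_set * family | stars_admissible a.1 a.2]|
     <= 2 ^ n * 'C(n, Delta).+1 ^ n)%N.
Proof.
pose families := [set F : family | [forall f in F, #|f| == Delta] && (#|F| <= n)%N].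
apply: leq_trans (_ : #|finset.setX (powerset [set: 'I_n]) families| <= _)%N.
  apply: subset_leq_card; apply/fintype.subsetP => -[X F]; rewrite !inE /=.
  by case/andP=> /andP[/andP[/andP[/andP[-> _] _] _] _] ->; rewrite finset.subsetT.
by rewrite cardsX card_powerset cardsT card_ord leq_mul2l card_uniform_families_le orbT.
Qed.

Definition stars_density_const : R := 3 * (Delta + 3)%:R / (7 * nu ^+ 2).

Lemma scaled_stars_density : (0 < n)%N -> 0 < nu ->
  stars_density_const * (ln n%:R / n%:R) <= p ^+ Delta ->
  3 * ((Delta + 3) * n)%N%:R * ln n%:R <= 7 * p ^+ Delta * nu ^+ 2 * n%:R ^+ 2.
Proof.
move=> n_gt0 nu_gt0 dense.
have scale_gt0 : 0 < 7 * nu ^+ 2 * n%:R ^+ 2 by rewrite !mulr_gt0 ?exprn_gt0 ?ltr0n.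
rewrite [leRHS](_ : _ = 7 * nu ^+ 2 * n%:R ^+ 2 * p ^+ Delta); last by ring.
rewrite (_ : 3 * _ * _ = 7 * nu ^+ 2 * n%:R ^+ 2 *
  (stars_density_const * (ln n%:R / n%:R))); last first.
  by rewrite /stars_density_const natrM; field; rewrite ?mulf_neq0 ?expf_neq0 ?gt_eqF ?ltr0n.
by rewrite ler_pM2l.
Qed.

Lemma card_stars_admissible_le_expn : (2 <= n)%N ->
  (#|[set a : vertex_set * family | stars_admissible a.1 a.2]|
     <= n ^ ((Delta + 2) * n))%N.
Proof.
move=> n_ge2; apply: leq_trans (card_stars_admissible_le) _.
rewrite -expnMn mulnC expnM leq_exp2rW // expnD.
have := bin_leq_expn n Delta; have : (0 < n ^ Delta)%N by rewrite expn_gt0; lia.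
move: (n ^ Delta)%N ('C(n, Delta)) => t C t_gt0 C_le_t.
have n2_ge4 : (4 <= n ^ 2)%N by rewrite (@leq_exp2r 2 n 2).
by have := leq_mul (leqnn t) n2_ge4; lia.
Qed.

Definition stars_threshold (X : vertex_set) (F : family) : nat :=
  (Num.truncn (7 * p ^+ Delta * #|X|%:R * #|F|%:R)).+1.

Definition stars_witness (a : vertex_set * family) (K : {set 'I_n * vertex_set}) :=
  (K \subset finset.setX a.1 a.2) && (#|K| == stars_threshold a.1 a.2).

Hypotheses (p_ge0 : 0 <= p) (p_le1 : p <= 1).

Lemma not_stars_event_witness E : ~~ @stars_event R Delta nu p n E ->
  [exists i : (vertex_set * family) * {set 'I_n * vertex_set},
     (stars_admissible i.1.1 i.1.2 && stars_witness i.1 i.2)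
       && (star_edges i.2 \subset E)].
Proof.
rewrite stars_eventE negb_forall => /existsP[X]; rewrite negb_forall => /existsP[F].
rewrite negb_imply -ltNge => /andP[adm many].
have : (stars_threshold X F <= #|star_set E X F|)%N.
  by rewrite /stars_threshold truncn_lt_nat ?mulr_ge0 ?exprn_ge0.
case/card_geqP => s [s_uniq s_size s_sub].
have sK : [set z in s] \subset star_set E X F.
  by apply/fintype.subsetP => z; rewrite inE => /s_sub.
apply/existsP; exists ((X, F), [set z in s]); rewrite /= adm (star_edges_subset sK).
rewrite /stars_witness cardsE (card_uniqP s_uniq) s_size eqxx !andbT.
by apply/fintype.subsetP => z /(fintype.subsetP sK); rewrite !inE => /and3P[-> ->].
Qed.

Lemma gnp_prob_not_stars_event_le :
  @gnp_prob R n p (predC (@stars_event R Delta nu p n)) <=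
  \sum_(a | stars_admissible a.1 a.2)
     'C(#|a.1| * #|a.2|, stars_threshold a.1 a.2)%:R
       * (p ^+ Delta) ^+ stars_threshold a.1 a.2.
Proof.
apply: le_trans (le_gnp_prob p_ge0 p_le1 (@not_stars_event_witness)) _.
apply: le_trans (gnp_prob_exists_le p_ge0 p_le1 _ _) _.
rewrite -(pair_big_dep (fun a => stars_admissible a.1 a.2) stars_witness
  (fun _ K => gnp_prob p (fun E => star_edges K \subset E))) /=.
apply: ler_sum => a /stars_admissibleP[F_card F_disjX F_trivI _ _].
rewrite (eq_bigr (fun _ => (p ^+ Delta) ^+ stars_threshold a.1 a.2)); last first.
  move=> K /andP[sK /eqP K_card].
  by rewrite gnp_prob_supset ?(star_edges_pairs F_disjX sK)
    ?(card_star_edges F_disjX F_trivI sK F_card) ?K_card ?exprM.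
rewrite (eq_bigl (fun K => K \in [set K | stars_witness a K])); last by move=> K; rewrite inE.
by rewrite sumr_const cards_draws cardsX mulr_natl.
Qed.

Lemma stars_witness_mass_le (X : vertex_set) (F : family) : (0 < n)%N -> 0 <= nu ->
  stars_admissible X F ->
  3 * ((Delta + 3) * n)%N%:R * ln n%:R <= 7 * p ^+ Delta * nu ^+ 2 * n%:R ^+ 2 ->
  'C(#|X| * #|F|, stars_threshold X F)%:R
      * (p ^+ Delta) ^+ stars_threshold X F
    <= (n%:R ^+ ((Delta + 3) * n))^-1.
Proof.
move=> n_gt0 nu_ge0 /stars_admissibleP[_ _ _ nuX /andP[XF _]] dense.
set k := stars_threshold X F.
set x := 7 * p ^+ Delta * #|X|%:R * #|F|%:R.
have x_ge0 : 0 <= x by rewrite !mulr_ge0 ?exprn_ge0.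
have x_lt_k : x < k%:R by rewrite -truncn_lt_nat // ltnSn.
have nunu : nu ^+ 2 * n%:R ^+ 2 <= #|X|%:R * #|F|%:R.
  rewrite -exprMn expr2 ler_pM ?mulr_ge0 //.
  by apply: le_trans nuX _; rewrite ler_nat.
have dense_x : 3 * ((Delta + 3) * n)%N%:R * ln n%:R <= k%:R :> R.
  apply: le_trans dense _; apply: le_trans (ltW x_lt_k).
  by rewrite /x -[leLHS]mulrA -[leRHS]mulrA ler_wpM2l ?mulr_ge0 ?exprn_ge0.
have k_gt0 : (0 < k)%N by [].
apply: le_trans (bin_exprn_le_expR (exprn_ge0 Delta p_ge0) k_gt0 _) _.
  have -> : 7 * ((#|X| * #|F|)%N%:R * p ^+ Delta) = x by rewrite /x natrM; ring.
  exact: ltW.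
have -> : n%:R ^+ ((Delta + 3) * n) = expR (((Delta + 3) * n)%N%:R * ln n%:R) :> R.
  by rewrite expRM_natl lnK // posrE ltr0n.
rewrite -expRN ler_expR.
by rewrite lerN2 ler_pdivlMr // mulrC mulrA.
Qed.

Lemma gnp_prob_not_stars_event_le_invn : (2 <= n)%N -> 0 < nu ->
  stars_density_const * (ln n%:R / n%:R) <= p ^+ Delta ->
  @gnp_prob R n p (predC (@stars_event R Delta nu p n)) <= n%:R^-1.
Proof.
move=> n_ge2 nu_gt0 dense.
have n_gt0 : (0 < n)%N by apply: leq_trans n_ge2.
have n_pos : 0 < n%:R :> R by rewrite ltr0n.
apply: le_trans (gnp_prob_not_stars_event_le) _.
apply: le_trans (_ : \sum_(a | stars_admissible a.1 a.2)
  (n%:R ^+ ((Delta + 3) * n))^-1 <= _).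
  apply: ler_sum => a adm; apply: stars_witness_mass_le => //; first exact: ltW.
  exact: scaled_stars_density.
rewrite (eq_bigl (fun a => a \in [set a | stars_admissible a.1 a.2])); last first.
  by move=> a; rewrite inE.
rewrite sumr_const; set B := _^-1; rewrite -[B *+ _]mulr_natl.
apply: le_trans (_ : (n ^ ((Delta + 2) * n))%:R * B <= _).
  by rewrite ler_wpM2r ?invr_ge0 ?exprn_ge0 ?ler_nat ?card_stars_admissible_le_expn // ltW.
rewrite /B (_ : ((Delta + 3) * n = (Delta + 2) * n + n)%N); last by lia.
rewrite natrX exprD invfM mulrA divff ?mul1r ?expf_neq0 ?gt_eqF //.
rewrite lef_pV2 ?posrE ?exprn_gt0 //.
by rewrite -natrX ler_nat -[X in (X <= _)%N]expn1 leq_pexp2l.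
Qed.

End StarsEvent.

Theorem lemma6p2 (R : realType) (Delta : nat) (nu : R) :
  (0 < Delta)%N -> 0 < nu ->
  exists c : R, forall eps : R, 0 < eps ->
    exists N : nat, forall n : nat, (N <= n)%N ->
      forall p : R, 0 <= p -> p <= 1 ->
        c * powR (ln (n%:R : R) / (n%:R : R)) (Delta%:R^-1) <= p ->
        1 - eps <= @gnp_prob R n p (@stars_event R Delta nu p n).
Proof.
move=> Delta_gt0 nu_gt0.
pose c0 := stars_density_const Delta nu.
have c0_ge0 : 0 <= c0 by rewrite divr_ge0 ?mulr_ge0 ?exprn_ge0 // ltW.
exists (1 + c0) => eps eps_gt0.
exists (maxn 2 (Num.truncn eps^-1).+1) => n; rewrite geq_max => /andP[n_ge2 n_gt_inv].
move=> p p_ge0 p_le1 p_large.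
have ln_ge0 : 0 <= ln n%:R / n%:R :> R by rewrite divr_ge0 ?ln_ge0 ?ler1n // ltnW.
have dense : c0 * (ln n%:R / n%:R) <= p ^+ Delta.
  apply: le_trans (powR_inv_ler_exprn Delta_gt0 _ ln_ge0 p_large); last by rewrite lerDl.
  by rewrite ler_wpM2r // lerDr.
have inv_n_le : n%:R^-1 <= eps.
  rewrite -[eps]invrK lef_pV2 ?posrE ?invr_gt0 ?ltr0n //; last exact: leq_trans n_ge2.
  by apply: ltW; rewrite -truncn_lt_nat ?invr_ge0 ?ltW.
rewrite gnp_probC.
have := gnp_prob_not_stars_event_le_invn p_ge0 p_le1 n_ge2 nu_gt0 dense.
lra.
Qed.
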